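(* Let $n\ge 1$, and let $E_1,\dots,E_n\in\mathbb{R}$ be the energy scores of a minibatch $B=\{x_i\}_{i=1}^n$. Define \[ \mu_B=\frac{1}{n}\sum_{j=1}^{n}E_j,\qquad s_B=\sqrt{\frac{1}{n}\sum_{j=1}^{n}(E_j-\mu_B)^2}, \] and, for constants $\epsilon_B>0$ and $\beta>0$, \[ \widetilde{E}_i=\frac{E_i-\mu_B}{s_B+\epsilon_B},\qquad w_i=\rho(-\beta\widetilde{E}_i),\qquad \rho(t)=\frac{1}{1+\exp(-t)}. \] If $n=1$, then $w_1=1/2$. If $n\ge 2$, then for every $i\in\{1,\dots,n\}$, \[ \rho\!\left(-\beta\sqrt{n-1}\right)\le w_i\le \rho\!\left(\beta\sqrt{n-1}\right). \] In particular, $0<w_i<1$ for all $i$.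
   Context: The $E_i$ are arbitrary real numbers (in the application, $E_i=E(x_i)$ is a disagreement score between a private and a proxy model on sample $x_i$); $w_i$ is called the trust weight of sample $x_i$. *)

(* real numbers R. Scores are E : nat -> R, indices 0..n-1
   correspond to x_1..x_n. *)
From Stdlib Require Import Reals Lra.
Open Scope R_scope.

Fixpoint rsum (n : nat) (f : nat -> R) : R :=
  match n with
  | O => 0
  | S m => rsum m f + f m
  end.

Definition sigmoid (t : R) : R := 1 / (1 + exp (- t)).

Definition batch_mean (n : nat) (E : nat -> R) : R :=
  / INR n * rsum n E.

Definition batch_std (n : nat) (E : nat -> R) : R :=
  sqrt (/ INR n * rsum n (fun j => (E j - batch_mean n E) ^ 2)).

Definition normalized_score (n : nat) (E : nat -> R) (epsB : R) (i : nat) : R :=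
  (E i - batch_mean n E) / (batch_std n E + epsB).

Definition trust_weight (n : nat) (E : nat -> R) (epsB beta : R) (i : nat) : R :=
  sigmoid (- beta * normalized_score n E epsB i).

(** Write [d j = E j - mu_B].  Since the [d j] sum to zero, [d i] is minus the
    sum of the other [n - 1] deviations, so [d i ^ 2 <= (n - 1) (S - d i ^ 2)]
    with [S = sum_j d j ^ 2] (Samuelson's inequality), i.e.
    [|d i| <= sqrt (n - 1) * s_B].  Dividing by [s_B + eps_B > s_B] gives
    [|E~_i| <= sqrt (n - 1)], and the sigmoid is increasing with values in
    [(0, 1)].  For [n = 1] the bound is [0], so [w_1 = rho 0 = 1/2]. *)
From Stdlib Require Import Reals Lra Lia.
Open Scope R_scope.

Lemma rsum_ext n f g :
  (forall j, (j < n)%nat -> f j = g j) -> rsum n f = rsum n g.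
Proof.
  induction n as [|n IH]; intros Hfg; simpl; [reflexivity|].
  rewrite IH by (intros; apply Hfg; lia).
  now rewrite Hfg by lia.
Qed.

Lemma rsum_plus n f g : rsum n (fun j => f j + g j) = rsum n f + rsum n g.
Proof. induction n as [|n IH]; simpl; [|rewrite IH]; ring. Qed.

Lemma rsum_scal_l n c f : rsum n (fun j => c * f j) = c * rsum n f.
Proof. induction n as [|n IH]; simpl; [|rewrite IH]; ring. Qed.

Lemma rsum_const n c : rsum n (fun _ => c) = INR n * c.
Proof. induction n as [|n IH]; [simpl; ring|]. rewrite S_INR; simpl; rewrite IH; ring. Qed.

Lemma rsum_nonneg n f : (forall j, 0 <= f j) -> 0 <= rsum n f.
Proof.
  intros Hf; induction n as [|n IH]; simpl; [lra|].
  pose proof (Hf n); lra.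
Qed.

Lemma rsum_except n f i : (i < n)%nat ->
  rsum n (fun j => if Nat.eqb j i then 0 else f j) = rsum n f - f i.
Proof.
  induction n as [|n IH]; intros Hi; [lia|]; simpl.
  destruct (Nat.eqb_spec n i) as [-> | Hni].
  - rewrite (rsum_ext i _ f); [ring|].
    intros j Hj; destruct (Nat.eqb_spec j i); [lia | reflexivity].
  - rewrite IH by lia; ring.
Qed.

Lemma rsum_sub_mean n E : (0 < n)%nat ->
  rsum n (fun j => E j - batch_mean n E) = 0.
Proof.
  intros Hn.
  assert (HnR : INR n <> 0) by (apply not_0_INR; lia).
  rewrite (rsum_ext n _ (fun j => E j + -1 * batch_mean n E)) by (intros; ring).
  rewrite rsum_plus, rsum_const; unfold batch_mean; field; exact HnR.
Qed.

Lemma samuelson_ineq n d i : (i < n)%nat -> rsum n d = 0 ->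
  INR n * d i ^ 2 <= (INR n - 1) * rsum n (fun j => d j ^ 2).
Proof.
  intros Hi Hd.
  set (k := INR n - 1); set (S := rsum n (fun j => d j ^ 2)).
  destruct (Nat.eq_dec n 1) as [-> | Hn].
  - replace i with 0%nat in * by lia.
    simpl in Hd; replace (d 0%nat) with 0 by lra.
    unfold k; simpl; ring_simplify; lra.
  - (* [0 <= sum_{j <> i} (k d j + d i)^2 = k (k S - n d i ^ 2)] *)
    assert (Hsq : rsum n (fun j => if Nat.eqb j i then 0 else (k * d j + d i) ^ 2)
                  = k * (k * S - INR n * d i ^ 2)).
    { rewrite rsum_except by exact Hi.
      rewrite (rsum_ext n _ (fun j => (k ^ 2 * d j ^ 2 + 2 * k * d i * d j) + d i ^ 2))
        by (intros; ring).
      rewrite !rsum_plus, !rsum_scal_l, rsum_const, Hd.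
      unfold S, k; ring. }
    assert (Hpos : 0 <= k * (k * S - INR n * d i ^ 2)).
    { rewrite <- Hsq; apply rsum_nonneg; intros j.
      destruct (Nat.eqb j i); [lra | apply pow2_ge_0]. }
    assert (Hk : 1 <= k).
    { unfold k; assert (2 <= INR n); [|lra].
      replace 2 with (INR 2) by (simpl; ring); apply le_INR; lia. }
    nra.
Qed.

Lemma batch_dev_bound n E i : (i < n)%nat ->
  - (sqrt (INR n - 1) * batch_std n E) <= E i - batch_mean n E
  <= sqrt (INR n - 1) * batch_std n E.
Proof.
  intros Hi.
  set (d := fun j => E j - batch_mean n E).
  set (S := rsum n (fun j => d j ^ 2)).
  assert (HnR : 0 < INR n) by (apply lt_0_INR; lia).
  assert (Hk : 0 <= INR n - 1).
  { assert (1 <= INR n); [|lra]. replace 1 with (INR 1) by reflexivity; apply le_INR; lia. }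
  assert (HS : 0 <= S) by (apply rsum_nonneg; intros; apply pow2_ge_0).
  assert (Hvar : batch_std n E ^ 2 = / INR n * S).
  { unfold batch_std; rewrite <- Rsqr_pow2; apply Rsqr_sqrt.
    apply Rmult_le_pos; [apply Rlt_le, Rinv_0_lt_compat|]; assumption. }
  assert (Hsam : INR n * d i ^ 2 <= (INR n - 1) * S)
    by (apply samuelson_ineq; [exact Hi | apply rsum_sub_mean; lia]).
  assert (Hsq : d i ^ 2 <= (sqrt (INR n - 1) * batch_std n E) ^ 2).
  { rewrite Rpow_mult_distr, pow2_sqrt, Hvar by exact Hk.
    apply (Rmult_le_reg_l (INR n)); [exact HnR|].
    replace (INR n * ((INR n - 1) * (/ INR n * S))) with ((INR n - 1) * S)
      by (field; lra).
    exact Hsam. }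
  assert (Hc : 0 <= sqrt (INR n - 1) * batch_std n E)
    by (apply Rmult_le_pos; apply sqrt_pos).
  change (E i - batch_mean n E) with (d i).
  split; nra.
Qed.

Lemma normalized_score_bound n E epsB i : 0 < epsB -> (i < n)%nat ->
  - sqrt (INR n - 1) <= normalized_score n E epsB i <= sqrt (INR n - 1).
Proof.
  intros He Hi; unfold normalized_score.
  pose proof (batch_dev_bound n E i Hi) as [Hlo Hhi].
  pose proof (sqrt_pos (INR n - 1)).
  assert (Hs : 0 <= batch_std n E) by apply sqrt_pos.
  set (c := sqrt (INR n - 1)) in *.
  set (s := batch_std n E) in *.
  set (z := (E i - batch_mean n E) / (s + epsB)).
  assert (Hz : E i - batch_mean n E = z * (s + epsB)) by (unfold z; field; lra).
  rewrite Hz in Hlo, Hhi.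
  split; nra.
Qed.

Lemma sigmoid_0 : sigmoid 0 = 1 / 2.
Proof. unfold sigmoid; rewrite Ropp_0, exp_0; field. Qed.

Lemma sigmoid_bounds t : 0 < sigmoid t < 1.
Proof.
  unfold sigmoid; pose proof (exp_pos (- t)); split.
  - apply Rdiv_lt_0_compat; lra.
  - unfold Rdiv; rewrite Rmult_1_l, <- Rinv_1.
    apply Rinv_1_lt_contravar; lra.
Qed.

Lemma sigmoid_le x y : x <= y -> sigmoid x <= sigmoid y.
Proof.
  intros Hxy; unfold sigmoid, Rdiv; rewrite !Rmult_1_l.
  assert (exp (- y) <= exp (- x)).
  { destruct (Req_dec x y) as [-> | Hne]; [lra|].
    left; apply exp_increasing; lra. }
  apply Rinv_le_contravar; [pose proof (exp_pos (- y))|]; lra.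
Qed.

Lemma trust_weight_bounds n E epsB beta i : 0 < epsB -> 0 <= beta -> (i < n)%nat ->
  sigmoid (- beta * sqrt (INR n - 1)) <= trust_weight n E epsB beta i
  <= sigmoid (beta * sqrt (INR n - 1)).
Proof.
  intros He Hb Hi; unfold trust_weight.
  pose proof (normalized_score_bound n E epsB i He Hi).
  split; apply sigmoid_le; nra.
Qed.

Theorem proposition2 (n : nat) (E : nat -> R) (epsB beta : R) :
  (1 <= n)%nat -> 0 < epsB -> 0 < beta ->
  (n = 1%nat -> trust_weight n E epsB beta 0 = 1 / 2) /\
  ((2 <= n)%nat -> forall i : nat, (i < n)%nat ->
     sigmoid (- beta * sqrt (INR n - 1)) <= trust_weight n E epsB beta i /\
     trust_weight n E epsB beta i <= sigmoid (beta * sqrt (INR n - 1))) /\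
  (forall i : nat, (i < n)%nat ->
     0 < trust_weight n E epsB beta i /\ trust_weight n E epsB beta i < 1).
Proof.
  intros _ He Hb; split; [|split].
  - intros ->.
    pose proof (trust_weight_bounds 1 E epsB beta 0 He (Rlt_le _ _ Hb) Nat.lt_0_1).
    replace (INR 1 - 1) with 0 in * by (simpl; ring).
    rewrite sqrt_0, !Rmult_0_r, sigmoid_0 in *; lra.
  - intros _ i Hi; apply trust_weight_bounds; [exact He | lra | exact Hi].
  - intros i _; apply sigmoid_bounds.
Qed.
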